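(* Let $b\ge 2$. For every finite nonempty string $I$ of base-$b$ digits there exist infinitely many $b$-wMRH numbers whose base-$b$ representation contains $I$ as a contiguous substring.
   Context: Fix a base $b\ge 2$. $s_b(N)$ is the sum of the base-$b$ digits of $N$. For a positive integer $X$, its reversal $X^R$ is the integer whose base-$b$ representation is that of $X$ written in reverse order (leading zeros of the result are dropped). A positive integer $N$ is a $b$-wMRH number if there exists an integer $A\ge 0$ such that $N=(A+s_b(N))\cdot(A+s_b(N))^R$. *)

From mathcomp Require Import all_boot.
Set Implicit Arguments. Unset Strict Implicit. Unset Printing Implicit Defensive.

(* Base-b digits of n, least significant first (empty for n = 0).
   Fuel n suffices since b >= 2 makes n strictly decrease. *)
Fixpoint digits_le_fuel (fuel b n : nat) : seq nat :=
  match fuel with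
  | 0 => [::]
  | fuel'.+1 => if n == 0 then [::] else (n %% b) :: digits_le_fuel fuel' b (n %/ b)
  end.

Definition digits_le (b n : nat) : seq nat := digits_le_fuel n b n.

Definition digits (b n : nat) : seq nat := rev (digits_le b n).

Definition from_digits (b : nat) (s : seq nat) : nat := foldl (fun acc d => acc * b + d) 0 s.

Definition digsum (b n : nat) : nat := sumn (digits_le b n).

(* X^R: the integer whose base-b representation is that of X reversed
   (leading zeros of the result are dropped automatically by evaluation). *)
Definition rev_num (b x : nat) : nat := from_digits b (rev (digits b x)).

Definition wMRH (b N : nat) : Prop :=
  0 < N /\ exists A : nat, N = (A + digsum b N) * rev_num b (A + digsum b N).

(* Take X with base-b representation 1 0^k I.  Its reversal is R b^(k+1) + 1,
   so N = X X^R agrees with X modulo b^(k+1) and therefore ends in I.  The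
   digit sum of N is only logarithmic in N, hence at most X once k is large,
   and A = X - s_b(N) makes N a b-wMRH number; N grows without bound with k. *)

From mathcomp Require Import all_boot.
From mathcomp Require Import zify.

Set Implicit Arguments.
Unset Strict Implicit.
Unset Printing Implicit Defensive.

Lemma from_digits_rcons b s d : from_digits b (rcons s d) = from_digits b s * b + d.
Proof. by rewrite /from_digits foldl_rcons. Qed.

Lemma from_digits1 b d : from_digits b [:: d] = d.
Proof. by rewrite /from_digits /= mul0n. Qed.

Lemma from_digits_cat b s1 s2 :
  from_digits b (s1 ++ s2) = from_digits b s1 * b ^ size s2 + from_digits b s2.
Proof.
elim/last_ind: s2 => [|s2 d IH]; first by rewrite cats0 expn0 muln1 addn0.
rewrite -rcons_cat !from_digits_rcons IH size_rcons expnSr; lia.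
Qed.

Lemma from_digits_nseq0 b k : from_digits b (nseq k 0) = 0.
Proof.
by elim: k => // k IH; rewrite -{1}addn1 nseqD cat_nseq -cats1 from_digits_cat /= IH.
Qed.

Lemma from_digits_lt b s : all (fun d => d < b) s -> from_digits b s < b ^ size s.
Proof.
elim/last_ind: s => [|s d IH]; first by rewrite expn0.
rewrite all_rcons from_digits_rcons size_rcons expnSr => /andP[hd /IH hs]; nia.
Qed.

Section Digits.
Variable b : nat.
Hypothesis b_gt1 : 1 < b.

Lemma digits_le_fuel_enough f1 f2 n : n <= f1 -> n <= f2 ->
  digits_le_fuel f1 b n = digits_le_fuel f2 b n.
Proof.
elim: f1 f2 n => [|f1 IH] [|f2] n /= h1 h2; [by [] | by have -> : n = 0 by lia
  | by have -> : n = 0 by lia |].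
case: eqP => // /eqP n_neq0; congr (_ :: _).
have : n %/ b < n by apply: ltn_Pdiv; lia.
move=> ?; apply: IH; lia.
Qed.

Lemma digits_leE n : 0 < n -> digits_le b n = n %% b :: digits_le b (n %/ b).
Proof.
case: n => // n _; rewrite /digits_le /=; congr (_ :: _).
have : n.+1 %/ b < n.+1 by exact: ltn_Pdiv.
move=> ?; apply: digits_le_fuel_enough; lia.
Qed.

Lemma digits_rcons n d : d < b -> 0 < n * b + d ->
  digits b (n * b + d) = rcons (digits b n) d.
Proof.
move=> d_lt n_gt0; rewrite /digits digits_leE // rev_cons.
by rewrite modnMDl modn_small // divnMDl ?divn_small ?addn0 //; lia.
Qed.

Lemma digits_shift n s : 0 < n -> all (fun d => d < b) s ->
  digits b (n * b ^ size s + from_digits b s) = digits b n ++ s.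
Proof.
move=> n_gt0; elim/last_ind: s => [|s d IH]; first by rewrite expn0 muln1 addn0 cats0.
rewrite all_rcons size_rcons from_digits_rcons => /andP[d_lt /IH {}IH].
have -> : n * b ^ (size s).+1 + (from_digits b s * b + d)
        = (n * b ^ size s + from_digits b s) * b + d by rewrite expnSr; lia.
have : 0 < b ^ size s by rewrite expn_gt0; lia.
by rewrite digits_rcons ?IH ?rcons_cat //; nia.
Qed.

Lemma suffix_digits n s : all (fun d => d < b) s -> b ^ size s <= n ->
  n %% b ^ size s = from_digits b s -> suffix s (digits b n).
Proof.
move=> s_digits n_ge mod_n; rewrite (divn_eq n (b ^ size s)) mod_n digits_shift //.
  exact: suffix_suffix.
by rewrite divn_gt0 // expn_gt0; lia.
Qed.

Lemma digsum_le n e : n < b ^ e -> digsum b n <= (b - 1) * e.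
Proof.
elim: e n => [|e IH] n n_lt; first by have -> : n = 0 by rewrite expn0 in n_lt; lia.
have [->|n_gt0] := posnP n; first by [].
rewrite /digsum digits_leE //= -/(digsum b (n %/ b)).
have : n %/ b < b ^ e by rewrite ltn_divLR -?expnSr //; lia.
move/IH; have := ltn_pmod n (_ : 0 < b); lia.
Qed.

Lemma linear_le_exp m : 5 <= m -> (b - 1) * (2 * m.+1) <= b ^ m.
Proof.
elim: m => [|m IH] // m_ge.
have [m_lt5 | /IH {}IH] := ltnP m 5.
  have -> : m = 4 by lia.
  have : 2 ^ 4 <= b ^ 4 by rewrite leq_exp2r.
  rewrite (expnS b 4); nia.
have : 2 <= b ^ m by apply: leq_trans (ltn_expl m b_gt1); lia.
rewrite expnS; nia.
Qed.

End Digits.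

Lemma wMRH_mul_rev b X : 0 < X * rev_num b X ->
  digsum b (X * rev_num b X) <= X -> wMRH b (X * rev_num b X).
Proof.
by move=> N_gt0 small_digsum; split=> //; exists (X - digsum b (X * rev_num b X)); rewrite subnK.
Qed.

Section Seed.
Variables (b : nat) (I : seq nat).
Hypotheses (b_gt1 : 1 < b) (I_digits : all (fun d => d < b) I).

Definition seed k := from_digits b (1 :: nseq k 0 ++ I).

Lemma seed_digits k : all (fun d => d < b) (1 :: nseq k 0 ++ I).
Proof. by rewrite /= all_cat all_nseq I_digits b_gt1 (ltnW b_gt1) orbT. Qed.

Lemma seedE k : seed k = b ^ (k + size I) + from_digits b I.
Proof.
rewrite /seed -cat1s !from_digits_cat from_digits_nseq0 from_digits1.
by rewrite mul1n mul0n size_cat size_nseq.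
Qed.

Lemma digits_seed k : digits b (seed k) = 1 :: nseq k 0 ++ I.
Proof.
have digits1 : digits b 1 = [:: 1] by rewrite -[1]/(0 * b + 1) digits_rcons.
rewrite /seed -cat1s from_digits_cat from_digits1 -digits1 digits_shift //.
by have /andP[] := seed_digits k.
Qed.

Lemma rev_num_seed k : rev_num b (seed k) = from_digits b (rev I) * b ^ k.+1 + 1.
Proof.
rewrite /rev_num digits_seed rev_cons rev_cat rev_nseq -cats1 -catA.
rewrite !from_digits_cat from_digits_nseq0 from_digits1 mul0n add0n.
by rewrite size_cat size_nseq (addn1 k).
Qed.

Lemma seed_lt k : seed k < b ^ (k + size I).+1.
Proof.
by have := from_digits_lt (seed_digits k); rewrite /= size_cat size_nseq.
Qed.

Lemma rev_num_seed_lt k : rev_num b (seed k) < b ^ (k + size I).+1.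
Proof.
rewrite /rev_num digits_seed.
have := @from_digits_lt b (rev (1 :: nseq k 0 ++ I)).
by rewrite all_rev seed_digits size_rev /= size_cat size_nseq; apply.
Qed.

Lemma seed_mul_rev_mod k : size I <= k ->
  seed k * rev_num b (seed k) %% b ^ size I = from_digits b I.
Proof.
move=> I_le_k; rewrite rev_num_seed mulnDr muln1 -(subnK (leqW I_le_k)) expnD.
rewrite !mulnA modnMDl seedE expnD modnMDl modn_small //.
exact: from_digits_lt.
Qed.

End Seed.

Theorem corollary14 (b : nat) (I : seq nat) :
  2 <= b -> I != [::] -> all (fun d => d < b) I ->
  forall M : nat, exists N : nat, M < N /\ wMRH b N /\ infix I (digits b N).
Proof.
move=> b_gt1 _ I_digits M.
set k := M + size I + 5; set m := k + size I.
set X := seed b I k; set N := X * rev_num b X.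
have X_ge : b ^ m <= X by rewrite /X seedE leq_addr.
have X_gt0 : 0 < X by apply: leq_trans X_ge; rewrite expn_gt0; lia.
have rev_gt0 : 0 < rev_num b X by rewrite /X (rev_num_seed b_gt1 I_digits) addn1.
have X_le_N : X <= N by rewrite leq_pmulr.
have N_lt : N < b ^ (m.+1 + m.+1).
  by rewrite expnD ltn_mul ?(seed_lt b_gt1 I_digits) ?(rev_num_seed_lt b_gt1 I_digits).
have digsum_le_X : digsum b N <= X.
  apply: leq_trans (digsum_le b_gt1 N_lt) _; apply: leq_trans X_ge.
  by rewrite addnn -mul2n linear_le_exp //; lia.
exists N; split; last split.
- have := ltn_expl m b_gt1; lia.
- by apply: wMRH_mul_rev => //; rewrite muln_gt0 X_gt0.
- apply/suffixW/suffix_digits => //; last by rewrite seed_mul_rev_mod //; lia.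
  apply: leq_trans X_le_N; apply: leq_trans X_ge; rewrite leq_exp2l //; lia.
Qed.
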